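(* Let $\alpha,\beta,\gamma\in\mathbb{C}$ with $\beta,\gamma\notin\{q^{-n}:n\in\mathbb{N}_0\}$. Then, as formal power series in $x,y$: (i) $\mathbf{H}_6(\alpha q;\beta;q,x,y)=\mathbf{H}_6(\alpha;\beta;q,x,y)+\frac{\alpha x(1-\alpha q)}{1-\beta}\mathbf{H}_6(\alpha q^2;\beta q;q,x,y)+\frac{\alpha xq(1-\alpha q)}{1-\beta}\mathbf{H}_6(\alpha q^2;\beta q;q,xq,y)+\frac{\alpha y}{1-\beta}\mathbf{H}_6(\alpha q;\beta q;q,xq^2,y)$; (ii) $\mathbf{H}_6(\alpha q;\beta;q,x,y)=\mathbf{H}_6(\alpha;\beta;q,x,y)+\frac{\alpha y}{1-\beta}\mathbf{H}_6(\alpha q;\beta q;q,x,y)+\frac{\alpha xq(1-\alpha q)}{1-\beta}\mathbf{H}_6(\alpha q^2;\beta q;q,xq,yq)+\frac{\alpha x(1-\alpha q)}{1-\beta}\mathbf{H}_6(\alpha q^2;\beta q;q,x,yq)$; (iii) $\mathbf{H}_7(\alpha q;\beta,\gamma;q,x,y)=\mathbf{H}_7(\alpha;\beta,\gamma;q,x,y)+\frac{\alpha x(1-\alpha q)}{1-\beta}\mathbf{H}_7(\alpha q^2;\beta q,\gamma;q,x,y)+\frac{\alpha xq(1-\alpha q)}{1-\beta}\mathbf{H}_7(\alpha q^2;\beta q,\gamma;q,xq,y)+\frac{\alpha y}{1-\gamma}\mathbf{H}_7(\alpha q;\beta,\gamma q;q,xq^2,y)$; (iv) $\mathbf{H}_7(\alpha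 q;\beta,\gamma;q,x,y)=\mathbf{H}_7(\alpha;\beta,\gamma;q,x,y)+\frac{\alpha y}{1-\gamma}\mathbf{H}_7(\alpha q;\beta,\gamma q;q,x,y)+\frac{\alpha xq(1-\alpha q)}{1-\beta}\mathbf{H}_7(\alpha q^2;\beta q,\gamma;q,xq,yq)+\frac{\alpha x(1-\alpha q)}{1-\beta}\mathbf{H}_7(\alpha q^2;\beta q,\gamma;q,x,yq)$.
   Context: Fix $q\in\mathbb{C}$ with $0<|q|<1$. For $a\in\mathbb{C}$ and $n\in\mathbb{N}_0$ the $q$-shifted factorial is $(a;q)_0=1$, $(a;q)_n=\prod_{k=0}^{n-1}(1-aq^k)$. For $\alpha\in\mathbb{C}$ and $\beta,\gamma\in\mathbb{C}\setminus\{q^{-n}:n\in\mathbb{N}_0\}$ the basic Horn functions are the double power series $\mathbf{H}_6(\alpha;\beta;q,x,y)=\sum_{r,s\ge0}\frac{(\alpha;q)_{2r+s}}{(\beta;q)_{r+s}(q;q)_r(q;q)_s}x^ry^s$ and $\mathbf{H}_7(\alpha;\beta,\gamma;q,x,y)=\sum_{r,s\ge0}\frac{(\alpha;q)_{2r+s}}{(\beta;q)_{r}(\gamma;q)_s(q;q)_r(q;q)_s}x^ry^s$. Expressions such as $\mathbf{H}_6(\alpha;\beta;q,xq,y)$ denote the series with $x$ replaced by $qx$ (and similarly for $y$). Identities are identities of formal power series in $x,y$ (equivalently of analytic functions near the origin). *)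

From HB Require Import structures.
From mathcomp Require Import all_boot all_order all_algebra.
From mathcomp Require Import reals.
From mathcomp.real_closed Require Import complex.
Set Implicit Arguments. Unset Strict Implicit. Unset Printing Implicit Defensive.
Import Order.TTheory GRing.Theory Num.Theory.
Local Open Scope ring_scope.

Section Defs.
Variable C : fieldType.

Definition qpoch (a q : C) (n : nat) : C := \prod_(k < n) (1 - a * q ^+ k).

(* formal power series in two variables x, y: coefficient of x^r y^s *)
Definition fps2 := nat -> nat -> C.

Definition fps2_add (F G : fps2) : fps2 := fun r s => F r s + G r s.
Definition fps2_scale (c : C) (F : fps2) : fps2 := fun r s => c * F r s.
(* x * F(x,y) *)
Definition fps2_mulx (F : fps2) : fps2 :=
  fun r s => if r is r'.+1 then F r' s else 0.
(* y * F(x,y) *)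
Definition fps2_muly (F : fps2) : fps2 :=
  fun r s => if s is s'.+1 then F r s' else 0.
(* F(c x, y) *)
Definition fps2_substx (c : C) (F : fps2) : fps2 := fun r s => c ^+ r * F r s.
(* F(x, c y) *)
Definition fps2_substy (c : C) (F : fps2) : fps2 := fun r s => c ^+ s * F r s.

Definition H6 (a b q : C) : fps2 := fun r s =>
  qpoch a q (2 * r + s) / (qpoch b q (r + s) * qpoch q q r * qpoch q q s).
Definition H7 (a b g q : C) : fps2 := fun r s =>
  qpoch a q (2 * r + s) / (qpoch b q r * qpoch g q s * qpoch q q r * qpoch q q s).
End Defs.

Infix "+f" := fps2_add (at level 50, left associativity).
Notation "c *f F" := (fps2_scale c F) (at level 40).

From HB Require Import structures.
From mathcomp Require Import all_boot all_order all_algebra.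
From mathcomp Require Import reals.
From mathcomp.real_closed Require Import complex.
From mathcomp Require Import zify ring.
From Stdlib Require Import FunctionalExtensionality.
Import Order.TTheory GRing.Theory Num.Theory.
Local Open Scope ring_scope.

(* Both functions have the shape
       hornA a D r s = (a;q)_{2r+s} / D r s
   with a denominator D not depending on the numerator parameter a, so the
   argument is carried out once for an arbitrary D:
   - raising a to aq changes the coefficient by  hdelta * (1 - q^{2r+s}),
     where  hdelta r s = a (aq;q)_{2r+s-1} / D r s  (q-Pochhammer shift);
   - each shifted series on the right-hand sides, multiplied by x or y,
     contributes hdelta times a "weight": (1 - q^r) for an x-term,
     (1 - q^s) for a y-term, further multiplied by q^r, q^s, q^{2r} when x
     or y is rescaled.  This uses only how D factors when r or s grows by 1;
   - the weights of each identity add up to 1 - q^{2r+s}.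
   The only genuine hypothesis is  1 - q^{n+1} <> 0, which |q| < 1 gives;
   with division by zero read as 0, no condition on beta, gamma is needed. *)

Section QPochhammer.
Variable C : fieldType.
Implicit Types (x q : C) (n : nat).

Lemma qpochSl x q n : qpoch x q n.+1 = (1 - x) * qpoch (x * q) q n.
Proof.
rewrite /qpoch big_ord_recl /= expr0 mulr1; congr (_ * _).
by apply: eq_bigr => i _; rewrite /bump /= exprS mulrA.
Qed.

Lemma qpochSr x q n : qpoch x q n.+1 = qpoch x q n * (1 - x * q ^+ n).
Proof. by rewrite /qpoch big_ord_recr. Qed.

Lemma qpoch_qqS q n : qpoch q q n.+1 = qpoch q q n * (1 - q ^+ n.+1).
Proof. by rewrite qpochSr -exprS. Qed.

Lemma qpoch_shift x q n :
  qpoch (x * q) q n = qpoch x q n + x * qpoch (x * q) q n.-1 * (1 - q ^+ n).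
Proof.
case: n => [|n]; first by rewrite /qpoch !big_ord0 expr0 subrr mulr0 addr0.
by rewrite /= [qpoch x q _]qpochSl qpochSr -mulrA -exprS; ring.
Qed.

End QPochhammer.

Section SeriesOperators.
Variable C : fieldType.
Implicit Types (c u v : C) (F G : fps2 C).

Lemma fps2_addE F G r s : (F +f G) r s = F r s + G r s.
Proof. by []. Qed.

Lemma coef_scale_mulx c F G (w : nat -> C) :
  w 0 = 0 -> (forall r s, c * F r s = G r.+1 s * w r.+1) ->
  forall r s, (c *f fps2_mulx F) r s = G r s * w r.
Proof. by move=> w0 hF [|r] s; rewrite /fps2_scale /= ?w0 ?mulr0 ?hF. Qed.

Lemma coef_scale_muly c F G (w : nat -> C) :
  w 0 = 0 -> (forall r s, c * F r s = G r s.+1 * w s.+1) ->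
  forall r s, (c *f fps2_muly F) r s = G r s * w s.
Proof. by move=> w0 hF r [|s]; rewrite /fps2_scale /= ?w0 ?mulr0 ?hF. Qed.

Lemma coef_scale_mulx_substx c u F r s :
  ((u * c) *f fps2_mulx (fps2_substx u F)) r s = u ^+ r * (c *f fps2_mulx F) r s.
Proof.
by case: r => [|r]; rewrite /fps2_scale /fps2_substx /= ?mulr0 // exprS; ring.
Qed.

Lemma coef_scale_mulx_substy c v F r s :
  (c *f fps2_mulx (fps2_substy v F)) r s = v ^+ s * (c *f fps2_mulx F) r s.
Proof. by case: r => [|r]; rewrite /fps2_scale /fps2_substy /= ?mulr0 //; ring. Qed.

Lemma coef_scale_muly_substx c u F r s :
  (c *f fps2_muly (fps2_substx u F)) r s = u ^+ r * (c *f fps2_muly F) r s.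
Proof. by case: s => [|s]; rewrite /fps2_scale /fps2_substx /= ?mulr0 //; ring. Qed.

End SeriesOperators.

Section HornSeries.
Variables (C : fieldType) (q : C).
Hypothesis hq : forall n, 1 - q ^+ n.+1 != 0.

Definition hornA (a : C) (D : nat -> nat -> C) : fps2 C :=
  fun r s => qpoch a q (2 * r + s) / D r s.

(* Coefficients of (hornA (aq) D - hornA a D) / (1 - q^{2r+s}). *)
Definition hdelta (a : C) (D : nat -> nat -> C) : fps2 C :=
  fun r s => a * qpoch (a * q) q (2 * r + s).-1 / D r s.

Lemma hornA_shift a D r s :
  hornA (a * q) D r s = hornA a D r s + hdelta a D r s * (1 - q ^+ (2 * r + s)).
Proof. by rewrite /hornA /hdelta qpoch_shift; ring. Qed.

Lemma div_mul_cancelr (x y z : C) : z != 0 -> x / (y * z) * z = x / y.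
Proof. by move=> hz; rewrite invfM mulrA divfK. Qed.

Lemma coef_hornA_mulx a d D D' :
  (forall r s, D r.+1 s = d * D' r s * (1 - q ^+ r.+1)) ->
  forall r s, ((a * (1 - a * q) / d) *f fps2_mulx (hornA (a * q ^+ 2) D')) r s
              = hdelta a D r s * (1 - q ^+ r).
Proof.
move=> hD; apply: coef_scale_mulx => [|r s]; first by rewrite expr0 subrr.
rewrite /hornA /hdelta hD div_mul_cancelr //.
have -> : (2 * r.+1 + s).-1 = (2 * r + s).+1 by lia.
by rewrite qpochSl -[a * q * q]mulrA -expr2 invfM; ring.
Qed.

Lemma coef_hornA_muly a d D D' :
  (forall r s, D r s.+1 = d * D' r s * (1 - q ^+ s.+1)) ->
  forall r s, ((a / d) *f fps2_muly (hornA (a * q) D')) r s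
              = hdelta a D r s * (1 - q ^+ s).
Proof.
move=> hD; apply: coef_scale_muly => [|r s]; first by rewrite expr0 subrr.
rewrite /hornA /hdelta hD div_mul_cancelr //.
have -> : (2 * r + s.+1).-1 = 2 * r + s by lia.
by rewrite invfM; ring.
Qed.

Lemma weights_x r s :
  1 - q ^+ (2 * r + s) = (1 - q ^+ r) + q ^+ r * (1 - q ^+ r) + (q ^+ 2) ^+ r * (1 - q ^+ s).
Proof. by rewrite exprD mul2n -addnn exprD exprAC expr2; ring. Qed.

Lemma weights_y r s :
  1 - q ^+ (2 * r + s) =
    (1 - q ^+ s) + q ^+ r * (q ^+ s * (1 - q ^+ r)) + q ^+ s * (1 - q ^+ r).
Proof. by rewrite exprD mul2n -addnn exprD; ring. Qed.

Definition den6 (b : C) (r s : nat) : C :=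
  qpoch b q (r + s) * qpoch q q r * qpoch q q s.
Definition den7 (b g : C) (r s : nat) : C :=
  qpoch b q r * qpoch g q s * qpoch q q r * qpoch q q s.

Lemma H6E a b : H6 a b q = hornA a (den6 b).
Proof. by []. Qed.

Lemma H7E a b g : H7 a b g q = hornA a (den7 b g).
Proof. by []. Qed.

Lemma den6_succr b r s : den6 b r.+1 s = (1 - b) * den6 (b * q) r s * (1 - q ^+ r.+1).
Proof. by rewrite /den6 addSn qpochSl qpoch_qqS; ring. Qed.

Lemma den6_succs b r s : den6 b r s.+1 = (1 - b) * den6 (b * q) r s * (1 - q ^+ s.+1).
Proof. by rewrite /den6 addnS qpochSl qpoch_qqS; ring. Qed.

Lemma den7_succr b g r s :
  den7 b g r.+1 s = (1 - b) * den7 (b * q) g r s * (1 - q ^+ r.+1).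
Proof. by rewrite /den7 qpochSl qpoch_qqS; ring. Qed.

Lemma den7_succs b g r s :
  den7 b g r s.+1 = (1 - g) * den7 b (g * q) r s * (1 - q ^+ s.+1).
Proof. by rewrite /den7 [qpoch g _ _]qpochSl qpoch_qqS; ring. Qed.

(* Puts the scalars of the rescaled-x terms in the form  q * c. *)
Lemma scale_shiftq a e d : a * q * e / d = q * (a * e / d).
Proof. by ring. Qed.

Lemma H6_contiguous_x a b :
  H6 (a * q) b q =
    H6 a b q
    +f (a * (1 - a * q) / (1 - b)) *f fps2_mulx (H6 (a * q ^+ 2) (b * q) q)
    +f (a * q * (1 - a * q) / (1 - b)) *f
          fps2_mulx (fps2_substx q (H6 (a * q ^+ 2) (b * q) q))
    +f (a / (1 - b)) *f fps2_muly (fps2_substx (q ^+ 2) (H6 (a * q) (b * q) q)).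
Proof.
apply: functional_extensionality => r; apply: functional_extensionality => s.
rewrite !fps2_addE !H6E scale_shiftq coef_scale_mulx_substx coef_scale_muly_substx.
rewrite (coef_hornA_mulx _ _ _ _ (den6_succr b)) (coef_hornA_muly _ _ _ _ (den6_succs b)).
by rewrite hornA_shift weights_x; ring.
Qed.

Lemma H6_contiguous_y a b :
  H6 (a * q) b q =
    H6 a b q
    +f (a / (1 - b)) *f fps2_muly (H6 (a * q) (b * q) q)
    +f (a * q * (1 - a * q) / (1 - b)) *f
          fps2_mulx (fps2_substx q (fps2_substy q (H6 (a * q ^+ 2) (b * q) q)))
    +f (a * (1 - a * q) / (1 - b)) *f
          fps2_mulx (fps2_substy q (H6 (a * q ^+ 2) (b * q) q)).
Proof.
apply: functional_extensionality => r; apply: functional_extensionality => s.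
rewrite !fps2_addE !H6E scale_shiftq coef_scale_mulx_substx !coef_scale_mulx_substy.
rewrite (coef_hornA_mulx _ _ _ _ (den6_succr b)) (coef_hornA_muly _ _ _ _ (den6_succs b)).
by rewrite hornA_shift weights_y; ring.
Qed.

Lemma H7_contiguous_x a b g :
  H7 (a * q) b g q =
    H7 a b g q
    +f (a * (1 - a * q) / (1 - b)) *f fps2_mulx (H7 (a * q ^+ 2) (b * q) g q)
    +f (a * q * (1 - a * q) / (1 - b)) *f
          fps2_mulx (fps2_substx q (H7 (a * q ^+ 2) (b * q) g q))
    +f (a / (1 - g)) *f fps2_muly (fps2_substx (q ^+ 2) (H7 (a * q) b (g * q) q)).
Proof.
apply: functional_extensionality => r; apply: functional_extensionality => s.
rewrite !fps2_addE !H7E scale_shiftq coef_scale_mulx_substx coef_scale_muly_substx.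
rewrite (coef_hornA_mulx _ _ _ _ (den7_succr b g)) (coef_hornA_muly _ _ _ _ (den7_succs b g)).
by rewrite hornA_shift weights_x; ring.
Qed.

Lemma H7_contiguous_y a b g :
  H7 (a * q) b g q =
    H7 a b g q
    +f (a / (1 - g)) *f fps2_muly (H7 (a * q) b (g * q) q)
    +f (a * q * (1 - a * q) / (1 - b)) *f
          fps2_mulx (fps2_substx q (fps2_substy q (H7 (a * q ^+ 2) (b * q) g q)))
    +f (a * (1 - a * q) / (1 - b)) *f
          fps2_mulx (fps2_substy q (H7 (a * q ^+ 2) (b * q) g q)).
Proof.
apply: functional_extensionality => r; apply: functional_extensionality => s.
rewrite !fps2_addE !H7E scale_shiftq coef_scale_mulx_substx !coef_scale_mulx_substy.
rewrite (coef_hornA_mulx _ _ _ _ (den7_succr b g)) (coef_hornA_muly _ _ _ _ (den7_succs b g)).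
by rewrite hornA_shift weights_y; ring.
Qed.

End HornSeries.

Lemma one_sub_expS_neq0 (C : numDomainType) (q : C) n :
  `|q| < 1 -> 1 - q ^+ n.+1 != 0.
Proof.
move=> hq1; rewrite subr_eq0; apply/eqP => h1.
have : `|q ^+ n.+1| < 1 by rewrite normrX exprn_ilt1.
by rewrite -h1 normr1 ltxx.
Qed.

Local Open Scope complex_scope.

Theorem theorem2p1 (R : realType) (q a b g : R[i])
  (hq0 : 0 < `|q|) (hq1 : `|q| < 1)
  (hb : forall n : nat, b != q ^- n) (hg : forall n : nat, g != q ^- n) :
  [/\ H6 (a * q) b q =
        H6 a b q
        +f (a * (1 - a * q) / (1 - b)) *f fps2_mulx (H6 (a * q ^+ 2) (b * q) q)
        +f (a * q * (1 - a * q) / (1 - b)) *f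
              fps2_mulx (fps2_substx q (H6 (a * q ^+ 2) (b * q) q))
        +f (a / (1 - b)) *f fps2_muly (fps2_substx (q ^+ 2) (H6 (a * q) (b * q) q)),
      H6 (a * q) b q =
        H6 a b q
        +f (a / (1 - b)) *f fps2_muly (H6 (a * q) (b * q) q)
        +f (a * q * (1 - a * q) / (1 - b)) *f
              fps2_mulx (fps2_substx q (fps2_substy q (H6 (a * q ^+ 2) (b * q) q)))
        +f (a * (1 - a * q) / (1 - b)) *f
              fps2_mulx (fps2_substy q (H6 (a * q ^+ 2) (b * q) q)),
      H7 (a * q) b g q =
        H7 a b g q
        +f (a * (1 - a * q) / (1 - b)) *f fps2_mulx (H7 (a * q ^+ 2) (b * q) g q)
        +f (a * q * (1 - a * q) / (1 - b)) *f
              fps2_mulx (fps2_substx q (H7 (a * q ^+ 2) (b * q) g q))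
        +f (a / (1 - g)) *f fps2_muly (fps2_substx (q ^+ 2) (H7 (a * q) b (g * q) q))
    & H7 (a * q) b g q =
        H7 a b g q
        +f (a / (1 - g)) *f fps2_muly (H7 (a * q) b (g * q) q)
        +f (a * q * (1 - a * q) / (1 - b)) *f
              fps2_mulx (fps2_substx q (fps2_substy q (H7 (a * q ^+ 2) (b * q) g q)))
        +f (a * (1 - a * q) / (1 - b)) *f
              fps2_mulx (fps2_substy q (H7 (a * q ^+ 2) (b * q) g q))].
Proof.
split; [apply: H6_contiguous_x | apply: H6_contiguous_y
       | apply: H7_contiguous_x | apply: H7_contiguous_y];
  by move=> n; apply: one_sub_expS_neq0.
Qed.
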